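(* $\approx$ is an equivalence relation on networks.
   Context: Setting: a graph-based calculus for wireless networks with local broadcast. Networks are built as $M,N::=G\langle\Phi\rangle \mid M\backslash c \mid M\oplus_D N$. Here $G=(|G|,\frown_G)$ is a finite undirected graph whose vertices are locations and which has no self-loops. $\Phi$ maps each location $p\in|G|$ to a sequential process. Processes are given by $P::={\bf 0}\mid c(x).P\mid \overline{c}(e).P\mid P+Q\mid {\bf if}~b~{\bf then}~P~{\bf else}~Q\mid A(\vec v)$. $M\backslash c$ restricts channel $c$. $M\oplus_D N$ composes two networks with disjoint locations, adding the edges $D\subseteq|M|\times|N|$. $|M|$ denotes the set of locations of $M$. Networks have a labelled transition semantics $M\xrightarrow{\delta}M'$ with labels $\delta::=p:\alpha\mid\tau$, where $\alpha::=cv\mid\overline{c}v$. A label $p:\alpha$ means the node at location $p$ receives, respectively broadcasts, value $v$ on channel $c$. A broadcast at $p$ is received only by nodes linked to $p$. A $\tau$ transition arises from a broadcast on a restricted channel. $M\xrightarrow{\tau^{\ast}}M'$ means $M$ reaches $M'$ by a finite, possibly empty, sequence of $\tau$-transitions. The weak transition $M\stackrel{p:\alpha}{\Longrightarrow}M'$ means that $M\xrightarrow{\tau^{\ast}}M_1\xrightarrow{p:\alpha}M_1'\xrightarrow{\tau^{\ast}}M'$ for some $M_1,M_1'$. A localized relation is a set $\mathcal{R}\subseteq{\bf Net}\times\mathcal{P}({\sf Loc}^2)\times{\bf Net}$ such that $(M,E,N)\in\mathcal{R}$ implies $E\subseteq|M|\times|N|$. It is symmetric if $(M,E,N)\in\mathcal{R}$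 implies $(N,E^{-1},M)\in\mathcal{R}$. A weak bisimulation is a symmetric localized relation $\mathcal{R}$ such that, whenever $(M,E,N)\in\mathcal{R}$, both of the following hold: - If $M\xrightarrow{\tau}M'$, then $N\xrightarrow{\tau^{\ast}}N'$ with $(M',E,N')\in\mathcal{R}$ for some $N'$. - If $M\xrightarrow{p:\alpha}M'$, then $N\stackrel{q:\alpha}{\Longrightarrow}N'$ for some $q$ with $(p,q)\in E$ and some $N'$ with $(M',E,N')\in\mathcal{R}$. $M\approx N$ (weak bisimilarity) holds iff there exist a weak bisimulation $\mathcal{R}$ and a relation $E\subseteq|M|\times|N|$ with $(M,E,N)\in\mathcal{R}$. *)

From Stdlib Require Import List Relations RelationClasses.
Import ListNotations.

Set Implicit Arguments.

Definition Loc := nat.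

Section Calculus.

Variable V : Type.
Variable Chan : Type.
Variable Name : Type.

(* Sequential processes, with higher-order abstract syntax for the binder
   of the input prefix c(x).P : the continuation is a function of the
   received value.  Since processes are closed, the output expression e
   and the boolean guard b appear already evaluated. *)
Inductive proc : Type :=
| PNil  : proc
| PIn   : Chan -> (V -> proc) -> proc
| POut  : Chan -> V -> proc -> proc
| PSum  : proc -> proc -> proc
| PIf   : bool -> proc -> proc -> proc
| PCall : Name -> list V -> proc.

Inductive act : Type :=
| AIn  : Chan -> V -> act
| AOut : Chan -> V -> act.

Variable Def : Name -> list V -> proc.

Inductive pstep : proc -> act -> proc -> Prop :=
| ps_in   : forall c k v, pstep (PIn c k) (AIn c v) (k v)
| ps_out  : forall c v P, pstep (POut c v P) (AOut c v) P
| ps_suml : forall P Q a P', pstep P a P' -> pstep (PSum P Q) a P'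
| ps_sumr : forall P Q a Q', pstep Q a Q' -> pstep (PSum P Q) a Q'
| ps_ift  : forall P Q a P', pstep P a P' -> pstep (PIf true P Q) a P'
| ps_iff  : forall P Q a Q', pstep Q a Q' -> pstep (PIf false P Q) a Q'
| ps_call : forall A vs a P', pstep (Def A vs) a P' -> pstep (PCall A vs) a P'.

Definition rcv (P : proc) (c : Chan) (v : V) (P' : proc) : Prop :=
  pstep P (AIn c v) P' \/ ((forall P'', ~ pstep P (AIn c v) P'') /\ P' = P).

Record graph : Type := Graph {
  gV : list Loc;
  gE : Loc -> Loc -> Prop;
  gE_sym : forall p q, gE p q -> gE q p;
  gE_irr : forall p, ~ gE p p;
  gE_in  : forall p q, gE p q -> In p gV /\ In q gV
}.

Inductive net : Type :=
| NGraph : graph -> (Loc -> proc) -> net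
| NRes   : net -> Chan -> net
| NComp  : net -> (Loc -> Loc -> Prop) -> net -> net.

Fixpoint locs (M : net) : list Loc :=
  match M with
  | NGraph G _ => gV G
  | NRes M _ => locs M
  | NComp M _ N => locs M ++ locs N
  end.

Inductive label : Type :=
| LAct : Loc -> act -> label
| LTau : label.

(* Recv M S c v M' : the nodes of M at locations in S hear a broadcast of v
   on channel c coming from outside M. *)
Inductive Recv : net -> (Loc -> Prop) -> Chan -> V -> net -> Prop :=
| rv_graph : forall G Phi Phi' S c v,
    (forall q, (In q (gV G) /\ S q -> rcv (Phi q) c v (Phi' q)) /\
               (~ (In q (gV G) /\ S q) -> Phi' q = Phi q)) ->
    Recv (NGraph G Phi) S c v (NGraph G Phi')
| rv_res_neq : forall M M' S c d v,
    c <> d -> Recv M S c v M' -> Recv (NRes M d) S c v (NRes M' d)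
| rv_res_eq : forall M S c v,
    Recv (NRes M c) S c v (NRes M c)
| rv_comp : forall M M' N N' D S c v,
    Recv M S c v M' -> Recv N S c v N' ->
    Recv (NComp M D N) S c v (NComp M' D N').

Inductive step : net -> label -> net -> Prop :=
| st_bcast : forall G Phi Phi' p c v,
    In p (gV G) ->
    pstep (Phi p) (AOut c v) (Phi' p) ->
    (forall q, q <> p ->
       (In q (gV G) /\ gE G p q -> rcv (Phi q) c v (Phi' q)) /\
       (~ (In q (gV G) /\ gE G p q) -> Phi' q = Phi q)) ->
    step (NGraph G Phi) (LAct p (AOut c v)) (NGraph G Phi')
| st_recv : forall G Phi Phi' p c v,
    In p (gV G) ->
    pstep (Phi p) (AIn c v) (Phi' p) ->
    (forall q, q <> p -> Phi' q = Phi q) ->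
    step (NGraph G Phi) (LAct p (AIn c v)) (NGraph G Phi')
| st_res_act : forall M M' d p a,
    step M (LAct p a) M' ->
    (forall c v, a = AOut c v \/ a = AIn c v -> c <> d) ->
    step (NRes M d) (LAct p a) (NRes M' d)
| st_res_hide : forall M M' p c v,
    step M (LAct p (AOut c v)) M' ->
    step (NRes M c) LTau (NRes M' c)
| st_res_tau : forall M M' d,
    step M LTau M' -> step (NRes M d) LTau (NRes M' d)
| st_comp_bcast_l : forall M M' N N' D p c v,
    step M (LAct p (AOut c v)) M' ->
    Recv N (fun q => D p q) c v N' ->
    step (NComp M D N) (LAct p (AOut c v)) (NComp M' D N')
| st_comp_bcast_r : forall M M' N N' D q c v,
    step N (LAct q (AOut c v)) N' ->
    Recv M (fun p => D p q) c v M' ->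
    step (NComp M D N) (LAct q (AOut c v)) (NComp M' D N')
| st_comp_recv_l : forall M M' N D p c v,
    step M (LAct p (AIn c v)) M' ->
    step (NComp M D N) (LAct p (AIn c v)) (NComp M' D N)
| st_comp_recv_r : forall M N N' D p c v,
    step N (LAct p (AIn c v)) N' ->
    step (NComp M D N) (LAct p (AIn c v)) (NComp M D N')
| st_comp_tau_l : forall M M' N D,
    step M LTau M' -> step (NComp M D N) LTau (NComp M' D N)
| st_comp_tau_r : forall M N N' D,
    step N LTau N' -> step (NComp M D N) LTau (NComp M D N').

Definition taus : net -> net -> Prop :=
  clos_refl_trans_1n net (fun M M' => step M LTau M').

Definition wstep (M : net) (p : Loc) (a : act) (M' : net) : Prop :=
  exists M1 M1', taus M M1 /\ step M1 (LAct p a) M1' /\ taus M1' M'.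

Definition lrel := net -> (Loc -> Loc -> Prop) -> net -> Prop.

Definition localized (R : lrel) : Prop :=
  forall M E N, R M E N -> forall p q, E p q -> In p (locs M) /\ In q (locs N).

Definition lsymmetric (R : lrel) : Prop :=
  forall M E N, R M E N -> R N (fun q p => E p q) M.

Definition weak_bisimulation (R : lrel) : Prop :=
  localized R /\ lsymmetric R /\
  forall M E N, R M E N ->
    (forall M', step M LTau M' -> exists N', taus N N' /\ R M' E N') /\
    (forall p a M', step M (LAct p a) M' ->
       exists q N', E p q /\ wstep N q a N' /\ R M' E N').

Definition wbisim (M N : net) : Prop :=
  exists R E, weak_bisimulation R /\ R M E N.

End Calculus.

(* The identity relation, localized on the diagonal of |M|, gives reflexivity,
   and symmetry is built into weak bisimulations.  For transitivity, the
   relational composite of two weak simulations is again one: a weak transition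
   is matched along the second relation tau by tau through its prefix and
   suffix.  Composing a symmetric relation with itself keeps it symmetric, so
   one composes the union of the two bisimulations with itself. *)
From Stdlib Require Import List Relations RelationClasses.

Set Implicit Arguments.
Unset Strict Implicit.

Section WeakBisimilarity.

Variables (V Chan Name : Type) (Def : Name -> list V -> proc V Chan Name).

Local Notation Net := (net V Chan Name).
Local Notation Lrel := (lrel V Chan Name).
Local Notation step := (step Def).
Local Notation taus := (taus Def).
Local Notation wstep := (wstep Def).
Local Notation tau := (LTau V Chan).

Lemma recv_locs (M M' : Net) S c v : Recv Def M S c v M' -> locs M' = locs M.
Proof. induction 1; simpl; congruence. Qed.

Lemma step_locs (M M' : Net) l : step M l M' -> locs M' = locs M.
Proof.
  induction 1; simpl; try congruence;
    repeat match goal with H : Recv _ _ _ _ _ _ |- _ => apply recv_locs in H end;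
    congruence.
Qed.

Lemma step_act_in_locs (M M' : Net) p a : step M (LAct p a) M' -> In p (locs M).
Proof.
  remember (LAct p a) as l eqn:Hl; intros Hs; revert p a Hl.
  induction Hs; intros p0 a0 Hl; inversion Hl; subst; simpl;
    eauto using in_or_app.
Qed.

Lemma taus_trans (M N K : Net) : taus M N -> taus N K -> taus M K.
Proof.
  induction 1 as [|M M1 N Hs _ IH]; intros HNK; [exact HNK|].
  exact (Relation_Operators.rt1n_trans _ _ _ _ _ Hs (IH HNK)).
Qed.

Lemma step_wstep (M M' : Net) p a : step M (LAct p a) M' -> wstep M p a M'.
Proof. intros Hs; exists M, M'; repeat split; auto; apply rt1n_refl. Qed.

Definition simulation (R : Lrel) : Prop :=
  forall M E N, R M E N ->
    (forall M', step M tau M' -> exists N', taus N N' /\ R M' E N') /\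
    (forall p a M', step M (LAct p a) M' ->
       exists q N', E p q /\ wstep N q a N' /\ R M' E N').

Section Simulation.

Variable R : Lrel.
Hypothesis simR : simulation R.

Lemma simulation_taus (M M' N : Net) E :
  taus M M' -> R M E N -> exists N', taus N N' /\ R M' E N'.
Proof.
  intros HM; revert N.
  induction HM as [M | M M1 M' Hs _ IH]; intros N HR.
  - exists N; split; [apply rt1n_refl | exact HR].
  - destruct (proj1 (simR HR) _ Hs) as [N1 [HN1 HR1]].
    destruct (IH _ HR1) as [N' [HN' HR']].
    exists N'; split; [eapply taus_trans; eauto | exact HR'].
Qed.

Lemma simulation_wstep (M M' N : Net) E p a :
  wstep M p a M' -> R M E N ->
  exists q N', E p q /\ wstep N q a N' /\ R M' E N'.
Proof.
  intros [M1 [M1' [HM1 [Hs HM1']]]] HR.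
  destruct (simulation_taus HM1 HR) as [N1 [HN1 HR1]].
  destruct (proj2 (simR HR1) _ _ _ Hs) as [q [N2 [Hq [[N3 [N3' [HN3 [Hs' HN3']]]] HR2]]]].
  destruct (simulation_taus HM1' HR2) as [N' [HN' HR']].
  exists q, N'; repeat split; auto.
  exists N3, N3'; repeat split; eauto using taus_trans.
Qed.

End Simulation.

Definition ldiag (M : Net) (p q : Loc) : Prop := p = q /\ In p (locs M).

Definition lid : Lrel := fun M E N => M = N /\ forall p q, E p q <-> ldiag M p q.

Lemma weak_bisimulation_lid : weak_bisimulation Def lid.
Proof.
  split; [|split].
  - intros M E N [-> HE] p q Hpq.
    apply HE in Hpq as [-> Hq]; split; exact Hq.
  - intros M E N [-> HE]; split; [reflexivity|].
    intros p q; rewrite HE; unfold ldiag; split; intros [-> Hq]; auto.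
  - intros M E N [-> HE]; split.
    + intros M' Hs; exists M'; split; [now apply clos_rt1n_step|].
      split; [reflexivity|]; unfold ldiag; now rewrite (step_locs Hs).
    + intros p a M' Hs; exists p, M'; split; [apply HE; split; eauto using step_act_in_locs|].
      split; [now apply step_wstep|].
      split; [reflexivity|]; unfold ldiag; now rewrite (step_locs Hs).
Qed.

Definition lunion (R1 R2 : Lrel) : Lrel := fun M E N => R1 M E N \/ R2 M E N.

Lemma simulation_lunion (R1 R2 : Lrel) :
  simulation R1 -> simulation R2 -> simulation (lunion R1 R2).
Proof.
  intros HB1 HB2 M E N [HR | HR].
  - destruct (HB1 _ _ _ HR) as [Htau Hact]; split.
    + intros M' Hs; destruct (Htau _ Hs) as [N' [HN HR']].
      exists N'; split; [exact HN | left; exact HR'].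
    + intros p a M' Hs; destruct (Hact _ _ _ Hs) as [q [N' [Hq [HN HR']]]].
      exists q, N'; repeat split; [exact Hq | exact HN | left; exact HR'].
  - destruct (HB2 _ _ _ HR) as [Htau Hact]; split.
    + intros M' Hs; destruct (Htau _ Hs) as [N' [HN HR']].
      exists N'; split; [exact HN | right; exact HR'].
    + intros p a M' Hs; destruct (Hact _ _ _ Hs) as [q [N' [Hq [HN HR']]]].
      exists q, N'; repeat split; [exact Hq | exact HN | right; exact HR'].
Qed.

Lemma weak_bisimulation_lunion (R1 R2 : Lrel) :
  weak_bisimulation Def R1 -> weak_bisimulation Def R2 ->
  weak_bisimulation Def (lunion R1 R2).
Proof.
  intros [HL1 [HS1 HB1]] [HL2 [HS2 HB2]]; split; [|split].
  - intros M E N [HR | HR]; eauto.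
  - intros M E N [HR | HR]; [left | right]; auto.
  - exact (simulation_lunion HB1 HB2).
Qed.

Definition rcomp (E1 E2 : Loc -> Loc -> Prop) (p q : Loc) : Prop :=
  exists k, E1 p k /\ E2 k q.

Definition lcomp (R1 R2 : Lrel) : Lrel :=
  fun M E N => exists K E1 E2,
    R1 M E1 K /\ R2 K E2 N /\ forall p q, E p q <-> rcomp E1 E2 p q.

Lemma localized_lcomp (R1 R2 : Lrel) :
  localized R1 -> localized R2 -> localized (lcomp R1 R2).
Proof.
  intros HL1 HL2 M E N [K [E1 [E2 [HR1 [HR2 HE]]]]] p q Hpq.
  apply HE in Hpq as [k [Hpk Hkq]].
  split; [exact (proj1 (HL1 _ _ _ HR1 _ _ Hpk)) | exact (proj2 (HL2 _ _ _ HR2 _ _ Hkq))].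
Qed.

Lemma lsymmetric_lcomp (R : Lrel) : lsymmetric R -> lsymmetric (lcomp R R).
Proof.
  intros HS M E N [K [E1 [E2 [HR1 [HR2 HE]]]]].
  exists K, (fun q k => E2 k q), (fun k p => E1 p k).
  repeat split; auto.
  - intros Hqp; apply HE in Hqp as [k [? ?]]; exists k; auto.
  - intros [k [? ?]]; apply HE; exists k; auto.
Qed.

Lemma simulation_lcomp (R1 R2 : Lrel) :
  simulation R1 -> simulation R2 -> simulation (lcomp R1 R2).
Proof.
  intros HB1 HB2 M E N [K [E1 [E2 [HR1 [HR2 HE]]]]]; split.
  - intros M' Hs.
    destruct (proj1 (HB1 _ _ _ HR1) _ Hs) as [K' [HK HR1']].
    destruct (simulation_taus HB2 HK HR2) as [N' [HN HR2']].
    exists N'; split; [exact HN|]; exists K', E1, E2; auto.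
  - intros p a M' Hs.
    destruct (proj2 (HB1 _ _ _ HR1) _ _ _ Hs) as [k [K' [Hpk [HK HR1']]]].
    destruct (simulation_wstep HB2 HK HR2) as [q [N' [Hkq [HN HR2']]]].
    exists q, N'; repeat split; [apply HE; exists k; auto | exact HN |].
    exists K', E1, E2; auto.
Qed.

Lemma weak_bisimulation_lcomp (R : Lrel) :
  weak_bisimulation Def R -> weak_bisimulation Def (lcomp R R).
Proof.
  intros [HL [HS HB]]; split; [|split].
  - exact (localized_lcomp HL HL).
  - exact (lsymmetric_lcomp HS).
  - exact (simulation_lcomp HB HB).
Qed.

Lemma wbisim_refl : Reflexive (wbisim Def).
Proof.
  intros M; exists lid, (ldiag M); split; [exact weak_bisimulation_lid|].
  split; [reflexivity | tauto].
Qed.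

Lemma wbisim_sym : Symmetric (wbisim Def).
Proof.
  intros M N [R [E [HW HR]]]; exists R, (fun q p => E p q).
  split; [exact HW | exact (proj1 (proj2 HW) _ _ _ HR)].
Qed.

Lemma wbisim_trans : Transitive (wbisim Def).
Proof.
  intros M K N [R1 [E1 [HW1 HR1]]] [R2 [E2 [HW2 HR2]]].
  exists (lcomp (lunion R1 R2) (lunion R1 R2)), (rcomp E1 E2); split.
  - exact (weak_bisimulation_lcomp (weak_bisimulation_lunion HW1 HW2)).
  - exists K, E1, E2; repeat split; [left; exact HR1 | right; exact HR2 | |]; auto.
Qed.

End WeakBisimilarity.

Theorem lemma4 (V Chan Name : Type) (Def : Name -> list V -> proc V Chan Name) :
  Equivalence (@wbisim V Chan Name Def).
Proof.
  split; [apply wbisim_refl | apply wbisim_sym | apply wbisim_trans].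
Qed.
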